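(* For every integer $n\geqslant 2$ there exists a finite simple graph $G$ with $\mathrm{diam}(G)=2$ and $\mathrm{diam}(D_2(G))=n$.
   Context: All graphs are finite, simple and undirected. For a graph $G$, $\mathrm{d}_G(x,y)$ denotes the length of a shortest path between $x$ and $y$, and $\mathrm{diam}(G)$ is the maximum distance between vertices of $G$. The $2$-distance graph $D_2(G)$ of $G$ is the graph with vertex set $V(G)$ in which two vertices $x,y$ are adjacent if and only if $\mathrm{d}_G(x,y)=2$. *)

(* Finite simple graphs: a symmetric irreflexive relation on a finType. *)
From mathcomp Require Import all_boot.
Set Implicit Arguments. Unset Strict Implicit. Unset Printing Implicit Defensive.

Section Graphs.
Variable T : finType.

Inductive walk (r : T -> T -> Prop) : T -> T -> nat -> Prop :=
| walk0 x : walk r x x 0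
| walkS x y z k : r x y -> walk r y z k -> walk r x z k.+1.

Definition gdist (r : T -> T -> Prop) (x y : T) (d : nat) : Prop :=
  walk r x y d /\ (forall k, k < d -> ~ walk r x y k).

Definition diam_eq (r : T -> T -> Prop) (D : nat) : Prop :=
  (forall x y, exists2 d, gdist r x y d & d <= D) /\
  (exists x y, gdist r x y D).

Definition D2 (r : T -> T -> Prop) : T -> T -> Prop := fun x y => gdist r x y 2.

End Graphs.

From mathcomp Require Import all_boot zify.
From Stdlib Require Import Classical_Prop.

(* The graph is the complement G of the cycle C_(2n+1). Vertices adjacent in
   the cycle are not adjacent in G but have a common G-neighbour (the vertex
   three steps further along the cycle, which needs at least 5 vertices),
   while all other distinct pairs are G-adjacent. Hence diam G = 2 and
   D_2(G) is the cycle itself, whose diameter is n. *)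

Set Implicit Arguments.
Unset Strict Implicit.
Unset Printing Implicit Defensive.

Section Walks.
Variables (T : finType) (r : T -> T -> Prop).

Lemma walk0P x y : walk r x y 0 <-> x = y.
Proof. by split=> [w | ->]; [inversion w | constructor]. Qed.

Lemma walkSP x z k : walk r x z k.+1 <-> exists2 y, r x y & walk r y z k.
Proof.
split=> [w | [y rxy wyz]]; last exact: walkS rxy wyz.
by inversion w as [|x' y k' z' rxy wyz]; exists y.
Qed.

Lemma walk_cat x y z k l : walk r x y k -> walk r y z l -> walk r x z (k + l).
Proof. by elim=> // a b c k' rab _ IH /IH; apply: walkS. Qed.

Lemma walk_rev x y k :
  (forall a b, r a b -> r b a) -> walk r x y k -> walk r y x k.
Proof.
move=> r_sym; elim=> [a | a b c k' rab _ IH]; first by constructor.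
rewrite -addn1; apply: walk_cat IH _.
by apply: walkS (r_sym _ _ rab) _; constructor.
Qed.

Lemma walk_sub (s : T -> T -> Prop) x y k :
  (forall a b, r a b -> s a b) -> walk r x y k -> walk s x y k.
Proof.
move=> sub_rs; elim=> [a | a b c k' /sub_rs]; first by constructor.
by move=> sab _; apply: walkS sab.
Qed.

Lemma walk_gdist x y k : walk r x y k -> exists2 d, gdist r x y d & d <= k.
Proof.
elim/ltn_ind: k => k IH w.
have [[j ltjk wj] | no_shorter] := classic (exists2 j, j < k & walk r x y j).
  by have [d gd ledj] := IH j ltjk wj; exists d => //; apply: leq_trans ledj (ltnW ltjk).
by exists k => //; split=> // j ltjk wj; apply: no_shorter; exists j.
Qed.

Lemma gdist2P x y :
  gdist r x y 2 <-> [/\ x <> y, ~ r x y & exists z, r x z /\ r z y].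
Proof.
split=> [[w no_shorter] | [neq_xy nrxy [z [rxz rzy]]]].
  have [z rxz /walkSP [y' rzy' /walk0P eq_y'y]] := (walkSP _ _ _).1 w.
  split; last by exists z; rewrite -eq_y'y.
    by move=> eq_xy; apply: (no_shorter 0) => //; apply/walk0P.
  by move=> rxy; apply: (no_shorter 1) => //; apply/walkSP; exists y => //; apply/walk0P.
split; first by apply/walkSP; exists z => //; apply/walkSP; exists y => //; apply/walk0P.
case=> [|[|]] // _; first by move/walk0P.
by case/walkSP=> y' rxy' /walk0P eq_y'y; apply: nrxy; rewrite -eq_y'y.
Qed.

Lemma diam_eq_walks D x0 y0 :
  (forall x y, exists2 k, walk r x y k & k <= D) -> gdist r x0 y0 D ->
  diam_eq r D.
Proof.
move=> short_walks far; split; last by exists x0, y0.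
move=> x y; have [k w le_kD] := short_walks x y.
by have [d gd le_dk] := walk_gdist w; exists d => //; apply: leq_trans le_dk le_kD.
Qed.

End Walks.

Section Transfer.
Variables (T : finType) (r s : T -> T -> Prop).
Hypothesis eq_rs : forall x y, r x y <-> s x y.

Lemma gdist_eq x y d : gdist r x y d -> gdist s x y d.
Proof.
case=> w no_shorter; split; first by apply: walk_sub w => a b /eq_rs.
by move=> k ltkd w'; apply: no_shorter ltkd _; apply: walk_sub w' => a b /eq_rs.
Qed.

Lemma diam_eq_eq D : diam_eq r D -> diam_eq s D.
Proof.
case=> near [x0 [y0 far]]; split; last by exists x0, y0; apply: gdist_eq.
by move=> x y; have [d gd le_dD] := near x y; exists d => //; apply: gdist_eq.
Qed.

End Transfer.

Section Cycle.
Variable p : nat.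
Implicit Types x y z : 'I_p.+1.

Definition cycle_next x y : bool :=
  (y == x.+1 :> nat) || (x == p :> nat) && (y == 0 :> nat).

Definition cycle_rel x y : bool := cycle_next x y || cycle_next y x.

Definition cycle_compl x y : bool := (x != y) && ~~ cycle_rel x y.

Lemma cycle_rel_sym : symmetric cycle_rel.
Proof. by move=> x y; rewrite /cycle_rel orbC. Qed.

Lemma cycle_compl_sym : symmetric cycle_compl.
Proof. by move=> x y; rewrite /cycle_compl eq_sym cycle_rel_sym. Qed.

Lemma cycle_compl_irr : irreflexive cycle_compl.
Proof. by move=> x; rewrite /cycle_compl eqxx. Qed.

Lemma cycle_walk_up x y : x <= y -> walk (fun a b => cycle_rel a b) x y (y - x).
Proof.
move=> le_xy; have /= := ltn_ord y; have : y = x + (y - x) :> nat by lia.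
move: (y - x) => k; elim: k x {le_xy} => [|k IH] x def_y lt_y.
  by rewrite (_ : x = y); [constructor | apply/val_inj => /=; lia].
have lt_x1 : x.+1 < p.+1 by lia.
apply: (walkS (y := Ordinal lt_x1)); first by rewrite /cycle_rel /cycle_next /= eqxx.
by apply: IH => //=; lia.
Qed.

Lemma cycle_walk_wrap x y :
  x <= y -> walk (fun a b => cycle_rel a b) y x (p.+1 - (y - x)).
Proof.
move=> le_xy; have to_max := cycle_walk_up (y := ord_max) (leq_ord y).
have to_x := cycle_walk_up (x := ord0) (leq0n x).
have wrap : walk (fun a b => cycle_rel a b) ord_max ord0 1.
  by apply: walkS (walk0 _ _); rewrite /cycle_rel /cycle_next /=; lia.
have := walk_cat to_max (walk_cat wrap to_x).
by rewrite (_ : _ + _ = p.+1 - (y - x)) //=; have := ltn_ord y; lia.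
Qed.

Lemma cycle_walk_short n x y :
  p <= n + n -> exists2 k, walk (fun a b => cycle_rel a b) x y k & k <= n.
Proof.
move=> le_pn; wlog le_xy : x y / x <= y => [hwlog|].
  case: (leqP x y) => [/hwlog // | /ltnW/hwlog [k w le_kn]].
  by exists k => //; apply: walk_rev w => a b; rewrite cycle_rel_sym.
case: (leqP (y - x) n) => [le_yxn | lt_nyx]; first by exists (y - x); first exact: cycle_walk_up.
exists (p.+1 - (y - x)); last by lia.
by apply: walk_rev (cycle_walk_wrap le_xy) => a b; rewrite cycle_rel_sym.
Qed.

(* min(y, p + 1 - y) is the cycle distance from 0 to y; it changes by at most 1 per step. *)
Lemma cycle_walk_lb x y k :
  walk (fun a b => cycle_rel a b) x y k -> minn y (p.+1 - y) <= minn x (p.+1 - x) + k.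
Proof.
elim=> [a | a b c k' rab _ IH]; first by lia.
by move: rab IH; rewrite /cycle_rel /cycle_next; have := ltn_ord a; have := ltn_ord b; lia.
Qed.

End Cycle.

Lemma cycle_diam n : diam_eq (fun x y : 'I_(n + n).+1 => cycle_rel x y) n.
Proof.
have lt_n : n < (n + n).+1 by lia.
apply: (diam_eq_walks (x0 := ord0) (y0 := Ordinal lt_n)).
  by move=> x y; apply: cycle_walk_short.
split; first by have := cycle_walk_up (x := ord0) (y := Ordinal lt_n) (leq0n n); rewrite subn0.
by move=> k lt_kn /cycle_walk_lb /=; lia.
Qed.

Section CycleComplement.
Variable p : nat.
Hypothesis ge4_p : 4 <= p.
Implicit Types x y z : 'I_p.+1.

Lemma cycle_compl_common x y :
  cycle_rel x y -> exists z, cycle_compl x z && cycle_compl z y.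
Proof.
move=> rxy; wlog nxt : x y {rxy} / cycle_next x y => [hwlog|].
  case/orP: rxy => [/hwlog // | /hwlog [z /andP[yz zx]]].
  by exists z; rewrite cycle_compl_sym zx cycle_compl_sym.
pose c := if x + 3 <= p then x + 3 else x + 3 - p.+1.
have lt_c : c < p.+1 by rewrite /c; case: ifP => ?; have := ltn_ord x; lia.
exists (inord c); move: nxt.
rewrite /cycle_compl /cycle_rel /cycle_next -!val_eqE /= inordK // /c.
have := ltn_ord x; have := ltn_ord y; case: ifP => ?; lia.
Qed.

Lemma D2_cycle_compl x y :
  D2 (fun a b => cycle_compl a b) x y <-> cycle_rel x y.
Proof.
rewrite /D2 gdist2P; split=> [[neq_xy ncompl _] | rxy].
  by move: ncompl; rewrite /cycle_compl; case: eqP => //= _ /negP/negbNE.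
split; last by have [z /andP[xz zy]] := cycle_compl_common rxy; exists z.
  by move=> eq_xy; move: rxy; rewrite eq_xy /cycle_rel /cycle_next; lia.
by rewrite /cycle_compl rxy andbF.
Qed.

Lemma cycle_compl_diam : diam_eq (fun x y => cycle_compl x y) 2.
Proof.
have lt_1 : 1 < p.+1 by lia.
apply: (diam_eq_walks (x0 := ord0) (y0 := Ordinal lt_1)); last first.
  by apply/D2_cycle_compl.
move=> x y; have [<- | neq_xy] := eqVneq x y; first by exists 0 => //; constructor.
have [xy | nxy] := boolP (cycle_compl x y).
  by exists 1 => //; apply: walkS xy (walk0 _ _).
have [|z /andP[xz zy]] := cycle_compl_common (x := x) (y := y).
  by move: nxy; rewrite /cycle_compl neq_xy => /negbNE.
by exists 2 => //; apply: walkS xz (walkS zy (walk0 _ _)).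
Qed.

End CycleComplement.

Theorem mainTheorem1 (n : nat) (hn : 2 <= n) :
  exists (T : finType) (e : rel T),
    [/\ symmetric e, irreflexive e,
        diam_eq (fun x y => e x y) 2 &
        diam_eq (D2 (fun x y => e x y)) n].
Proof.
have ge4_nn : 4 <= n + n by lia.
exists 'I_(n + n).+1, (@cycle_compl (n + n)); split.
- exact: cycle_compl_sym.
- exact: cycle_compl_irr.
- exact: cycle_compl_diam.
- apply: diam_eq_eq (cycle_diam n) => x y.
  by rewrite (D2_cycle_compl ge4_nn).
Qed.
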